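(* Let $A\in\mathbb{R}^{n\times n}$, $B\in\mathbb{R}^{n\times m}$, $C\in\mathbb{R}^{p\times n}$, $D\in\mathbb{R}^{p\times p}$ with $(A,B)$ reachable, $(C,A)$ observable, $BB^T\succ0$, $DD^T\succ0$. Fix $c>0$ and a positive integer $N$. Let $P_0\in\mathcal{P}$ be arbitrary, $P_{t+1}=r^R_c(P_t)$ for $t\ge0$, and $P^d_k=P_{kN}$ for $k\ge0$ (the $N$-block, i.e. downsampled, iteration). Let $(\overline{P}_t)_{t\ge0}$ be defined by $\overline{P}_0=BB^T$, $\overline{P}_{t+1}=r(\overline{P}_t)$. Then for every integer $q\ge0$, $$P_t\succeq\overline{P}_q\quad\text{for all } t\ge q+1,\qquad\text{and}\qquad P^d_k\succeq \overline{P}_q\quad\text{for all } k\ge \Big\lceil \tfrac{q+1}{N}\Big\rceil.$$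
   Context: $\mathcal{P}$ denotes the cone of $n\times n$ real symmetric positive definite matrices; $\succeq$ is the Loewner order; $\lambda_1(P)$ is the largest eigenvalue of $P$. For $P\in\mathcal{P}$ and $\theta$ with $I-\theta P\succ0$, let $\gamma(\theta,P)=\tfrac12\big[\log\det(I-\theta P)+\mathrm{tr}((I-\theta P)^{-1})-n\big]$. For $c>0$ and $P\in\mathcal{P}$, $\theta_c(P)$ denotes the unique $\theta\in(0,\lambda_1(P)^{-1})$ with $\gamma(\theta,P)=c$ (its existence and uniqueness are taken as given). Define $r^R_c(P)=A[P^{-1}+C^T(DD^T)^{-1}C-\theta_c(P)I_n]^{-1}A^T+BB^T$ (the risk sensitive like Riccati map) and $r(P)=A[P^{-1}+C^T(DD^T)^{-1}C]^{-1}A^T+BB^T$ (the Riccati map). *)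

From HB Require Import structures.
From mathcomp Require Import all_boot all_order all_algebra.
From mathcomp Require Import boolp classical_sets reals exp.
Set Implicit Arguments. Unset Strict Implicit. Unset Printing Implicit Defensive.
Import Order.TTheory GRing.Theory Num.Theory.
Local Open Scope ring_scope.
Local Open Scope classical_set_scope.

Section Defs.
Variable R : realType.

Definition posdef n (P : 'M[R]_n) : Prop :=
  P^T = P /\ forall x : 'cV[R]_n, x != 0 -> 0 < (x^T *m P *m x) 0 0.

Definition psd n (P : 'M[R]_n) : Prop :=
  P^T = P /\ forall x : 'cV[R]_n, 0 <= (x^T *m P *m x) 0 0.

Definition loewner_ge n (P Q : 'M[R]_n) : Prop := psd (P - Q).

Definition lambda1 n (P : 'M[R]_n) : R := sup [set a : R | eigenvalue P a].

Definition gammaR n (theta : R) (P : 'M[R]_n) : R :=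
  (ln (\det (1%:M - theta *: P)) + \tr (invmx (1%:M - theta *: P)) - n%:R) / 2.

(* theta_c(P): the unique theta in (0, 1/lambda1(P)) with gamma(theta,P) = c
   (existence and uniqueness taken as given; chosen by xget) *)
Definition theta_c n (c : R) (P : 'M[R]_n) : R :=
  xget 0 [set th : R | 0 < th /\ th < (lambda1 P)^-1 /\ gammaR th P = c].

Definition rR n m p (A : 'M[R]_n) (B : 'M[R]_(n, m)) (C : 'M[R]_(p, n))
  (D : 'M[R]_p) (c : R) (P : 'M[R]_n) : 'M[R]_n :=
  A *m invmx (invmx P + C^T *m invmx (D *m D^T) *m C - theta_c c P *: 1%:M) *m A^T
  + B *m B^T.

Definition ric n m p (A : 'M[R]_n) (B : 'M[R]_(n, m)) (C : 'M[R]_(p, n))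
  (D : 'M[R]_p) (P : 'M[R]_n) : 'M[R]_n :=
  A *m invmx (invmx P + C^T *m invmx (D *m D^T) *m C) *m A^T + B *m B^T.

Definition reachable n m (A : 'M[R]_n) (B : 'M[R]_(n, m)) : Prop :=
  \rank (\mxrow_(k < n) (A ^+ k *m B)) = n.

Definition observable n p (C : 'M[R]_(p, n)) (A : 'M[R]_n) : Prop :=
  \rank (\mxcol_(k < n) (C *m A ^+ k)) = n.

End Defs.

From HB Require Import structures.
From mathcomp Require Import all_boot all_order all_algebra.
From mathcomp Require Import boolp classical_sets reals exp.
From mathcomp Require Import sesquilinear spectral complex.
From mathcomp Require Import lra.
Import Order.TTheory GRing.Theory Num.Theory.
Local Open Scope ring_scope.
Set Implicit Arguments. Unset Strict Implicit. Unset Printing Implicit Defensive.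

(* Both Riccati maps are the time update [X |-> A X A^T + B B^T] applied to
   the inverse of an information matrix [X^-1 + C^T (D D^T)^-1 C]; the
   risk-sensitive map first subtracts [theta_c(X) I >= 0], which keeps the
   information positive definite because [theta_c(X) < 1 / lambda1(X)].
   Matrix inversion reverses the Loewner order on positive definite matrices,
   so [r] is monotone, [r^R_c >= r] and [r^R_c >= B B^T] pointwise; induction
   on [q] gives [P_(s+q+1) >= Pbar_q] for every [s], and the downsampled claim
   is the case [t = k N]. *)

Section Spectral.
Local Open Scope sesquilinear_scope.
Import Num.Def.

Lemma eigenvalue_diag_conj (F : fieldType) n (M U : 'M[F]_n) (d : 'rV[F]_n) j :
  U \in unitmx -> M = invmx U *m diag_mx d *m U -> eigenvalue M (d 0 j).
Proof.
move=> Uu ->; apply/eigenvalueP; exists (delta_mx 0 j *m U).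
  by rewrite !mulmxA mulmxK // -rowE row_diag_mx scalemxAl.
apply: contraTneq isT => /(congr1 (mulmx^~ (invmx U))).
rewrite mulmxK // mul0mx => /matrixP /(_ 0 j); rewrite !mxE !eqxx /=.
by move=> /eqP; rewrite oner_eq0.
Qed.

Lemma diag_form_gt0 (C : numClosedFieldType) n (d w : 'rV[C]_n) :
  (forall j, 0 < d 0 j) -> w != 0 -> 0 < (w *m diag_mx d *m w^t*) 0 0.
Proof.
move=> dpos w0.
have term i : w 0 i * d 0 i * (w 0 i)^* = d 0 i * `|w 0 i| ^+ 2.
  by rewrite mulrAC normCK mulrC.
have [j wj] : exists j, w 0 j != 0.
  case: (pickP (fun j => w 0 j != 0)) => [j wj|none]; first by exists j.
  case/eqP: w0; apply/rowP => j; rewrite [RHS]mxE.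
  by have := none j; rewrite /= => /negbFE /eqP.
rewrite mul_mx_diag mxE (bigD1 j) //= !mxE term ltr_wpDr //.
  apply: sumr_ge0 => i _; rewrite !mxE term.
  by apply: mulr_ge0; [exact: ltW | exact: exprn_ge0].
by rewrite mulr_gt0 // exprn_gt0 // normr_gt0.
Qed.

Variable R : realType.
Local Notation realC := (real_complex R).

Lemma map_conj_real_complex k l (X : 'M[R]_(k, l)) :
  map_mx conjC (map_mx realC X) = map_mx realC X.
Proof.
by apply/matrixP => i j; rewrite !mxE; apply: conj_Creal; apply/complex_realP; exists (X i j).
Qed.

(* Diagonalize the complexification unitarily: the quadratic form becomes a
   positive combination of squared moduli of the coordinates. *)
Lemma posdef_eigenvalue_gt0 n (M : 'M[R]_n) :
  M^T = M -> (forall b, eigenvalue M b -> 0 < b) -> posdef M.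
Proof.
move=> Msym Meig; split=> // x x0.
pose Mc := map_mx realC M.
have herm : Mc \is hermsymmx.
  by rewrite is_hermitianmxE expr0 scale1r /Mc map_trmx Msym map_conj_real_complex.
have := orthomx_spectralP (hermitian_normalmx herm).
set U := spectralmx Mc; set d := spectral_diag Mc => McE.
have Uu : U \is unitarymx by exact: spectral_unitarymx.
have Uunit : U \in unitmx by exact: spectral_unit.
pose y := map_mx realC x^T; pose w := y *m U^t*.
have formE : realC ((x^T *m M *m x) 0 0) = (w *m diag_mx d *m w^t*) 0 0.
  have -> : realC ((x^T *m M *m x) 0 0) = (map_mx realC (x^T *m M *m x)) 0 0.
    by rewrite [in RHS]mxE.
  rewrite !map_mxM.
  have -> : map_mx realC x = y^t* by rewrite /y map_trmx trmxK map_conj_real_complex.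
  by rewrite -/Mc McE (invmx_unitary Uu) /w trmx_mul map_mxM trmxCK !mulmxA.
have w0 : w != 0.
  apply: contraNneq x0 => w0.
  have : y = w *m U by rewrite /w -mulmxA -(invmx_unitary Uu) mulVmx ?mulmx1.
  rewrite w0 mul0mx => /eqP; rewrite map_mx_eq0 => /eqP /(congr1 trmx).
  by rewrite trmxK trmx0 => ->.
have dpos j : 0 < d 0 j.
  have /complex_realP [k dk] : d 0 j \is Num.real.
    by move/mxOverP : (hermitian_spectral_diag_real herm); apply.
  have := eigenvalue_diag_conj j Uunit McE.
  by rewrite dk /Mc (eigenvalue_map realC) -(rmorph0 realC) ltcR => /Meig.
by rewrite -ltcR rmorph0 formE diag_form_gt0.
Qed.

End Spectral.

Section QuadraticForms.
Variables (R : realType) (n : nat).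
Implicit Types (M : 'M[R]_n) (x y : 'cV[R]_n).

Local Notation bform M x y := ((x^T *m M *m y) 0 0).

Lemma bformDM M M' x y : bform (M + M') x y = bform M x y + bform M' x y.
Proof. by rewrite mulmxDr mulmxDl mxE. Qed.

Lemma bformBM M M' x y : bform (M - M') x y = bform M x y - bform M' x y.
Proof. by rewrite mulmxBr mulmxBl !mxE. Qed.

Lemma bformZM a M x y : bform (a *: M) x y = a * bform M x y.
Proof. by rewrite -scalemxAr -scalemxAl mxE. Qed.

Lemma bformBl M x x' y : bform M (x - x') y = bform M x y - bform M x' y.
Proof. by rewrite linearB /= !mulmxBl !mxE. Qed.

Lemma bformBr M x y y' : bform M x (y - y') = bform M x y - bform M x y'.
Proof. by rewrite mulmxBr !mxE. Qed.

Lemma bformC M x y : M^T = M -> bform M x y = bform M y x.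
Proof.
move=> sM; have -> : bform M x y = (x^T *m M *m y)^T 0 0 by rewrite [RHS]mxE.
by rewrite !trmx_mul trmxK sM mulmxA.
Qed.

Lemma psdD M M' : psd M -> psd M' -> psd (M + M').
Proof.
move=> [sM hM] [sM' hM']; split; first by rewrite linearD /= sM sM'.
by move=> x; rewrite bformDM addr_ge0.
Qed.

Lemma posdef_psd M : posdef M -> psd M.
Proof.
move=> [sM hM]; split => // x; have [->|x0] := eqVneq x 0.
  by rewrite mulmx0 mxE.
exact/ltW/hM.
Qed.

Lemma posdefDr M M' : posdef M -> psd M' -> posdef (M + M').
Proof.
move=> [sM hM] [sM' hM']; split; first by rewrite linearD /= sM sM'.
by move=> x x0; rewrite bformDM ltr_wpDr ?hM.
Qed.

Lemma psd_conj k (T : 'M[R]_(k, n)) M : psd M -> psd (T *m M *m T^T).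
Proof.
move=> [sM hM]; split; first by rewrite !trmx_mul trmxK sM mulmxA.
move=> x; have -> : bform (T *m M *m T^T) x x = bform M (T^T *m x) (T^T *m x).
  by rewrite trmx_mul trmxK !mulmxA.
exact: hM.
Qed.

Lemma loewner_ge_trans M1 M2 M3 :
  loewner_ge M1 M2 -> loewner_ge M2 M3 -> loewner_ge M1 M3.
Proof. by move=> h12 h23; have := psdD h12 h23; rewrite addrA subrK. Qed.

Lemma psd_scale1 a : 0 <= a -> psd (a *: 1%:M : 'M[R]_n).
Proof.
move=> a0; split; first by rewrite linearZ /= trmx1.
move=> x; rewrite bformZM mulmx1 mulr_ge0 // mxE.
by apply: sumr_ge0 => i _; rewrite mxE -expr2 sqr_ge0.
Qed.

Lemma posdef_unit M : posdef M -> M \in unitmx.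
Proof.
move=> [sM hM]; rewrite unitmxE unitfE; apply/negP => /det0P [v v0 vM].
have vT0 : v^T != 0 by apply: contra v0 => /eqP h; rewrite -[v]trmxK h trmx0.
by have := hM _ vT0; rewrite trmxK vM mul0mx mxE ltxx.
Qed.

Lemma posdef_inv M : posdef M -> posdef (invmx M).
Proof.
move=> hM; have Mu := posdef_unit hM; case: hM => sM hM.
split; first by rewrite trmx_inv sM.
move=> x x0; set y := invmx M *m x.
have xE : x = M *m y by rewrite /y mulKVmx.
have y0 : y != 0 by apply: contra x0 => /eqP y0; rewrite xE y0 mulmx0.
by rewrite {1}xE trmx_mul sM mulmxK // xE mulmxA hM.
Qed.

(* The quadratic form of [invmx M] is the Legendre transform of that of [M]:
   equality holds at [z = invmx M *m x]. *)
Lemma bform_invmx_ge M x (z : 'cV[R]_n) : posdef M ->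
  2 * (z^T *m x) 0 0 - bform M z z <= bform (invmx M) x x.
Proof.
move=> hM; have Mu := posdef_unit hM; have [sM hMge] := posdef_psd hM.
set v := invmx M *m x.
have Mv : M *m v = x by rewrite /v mulKVmx.
have zv : bform M z v = (z^T *m x) 0 0 by rewrite -mulmxA Mv.
have vv : bform M v v = bform (invmx M) x x.
  by rewrite -mulmxA Mv /v trmx_mul trmx_inv sM.
have := hMge (z - v); rewrite bformBl !bformBr (bformC v z sM) zv vv; lra.
Qed.

Lemma loewner_ge_inv M M' : posdef M -> posdef M' -> loewner_ge M M' ->
  loewner_ge (invmx M') (invmx M).
Proof.
move=> hM hM' [_ hMM']; have Mu := posdef_unit hM.
have [sM _] := hM; have [sM' _] := hM'.
split; first by rewrite linearB /= !trmx_inv sM sM'.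
move=> x; rewrite bformBM subr_ge0.
set z := invmx M *m x.
have zx : (z^T *m x) 0 0 = bform (invmx M) x x by rewrite /z trmx_mul trmx_inv sM.
have zz : bform M z z = bform (invmx M) x x by rewrite -mulmxA /z mulKVmx.
have := hMM' z; rewrite bformBM subr_ge0 zz.
have := bform_invmx_ge x z hM'; rewrite zx; lra.
Qed.

End QuadraticForms.

Section RiskSensitiveShift.
Variables (R : realType) (n : nat).
Implicit Types (P : 'M[R]_n).

Lemma eigenvalue_posdef_gt0 P a : posdef P -> eigenvalue P a -> 0 < a.
Proof.
move=> [_ hP] /eigenvalueP [v vP v0].
have vT0 : v^T != 0 by apply: contra v0 => /eqP h; rewrite -[v]trmxK h trmx0.
have vv_ge0 : 0 <= (v *m v^T) 0 0.
  by rewrite mxE; apply: sumr_ge0 => i _; rewrite mxE -expr2 sqr_ge0.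
have := hP _ vT0; rewrite trmxK vP -scalemxAl mxE.
by apply: contraTT; rewrite -!leNgt => /mulr_le0_ge0; apply.
Qed.

(* Without an upper bound on the eigenvalues, [lambda1 P] is the junk value
   [sup] returns, [0], and so is its inverse. *)
Lemma eigenvalue_le_lambda1 P a :
  0 < (lambda1 P)^-1 -> eigenvalue P a -> a <= lambda1 P.
Proof.
move=> lam_gt0; have [hsup|nsup] := pselect (has_sup (eigenvalue P)).
  by move=> Pa; apply: sup_upper_bound.
by move: lam_gt0; rewrite /lambda1 sup_out // invr0 ltxx.
Qed.

Lemma posdef_invmx_subr_scale1 P th : posdef P -> 0 < th ->
  th < (lambda1 P)^-1 -> posdef (invmx P - th *: 1%:M).
Proof.
move=> hP th_gt0 th_lt; have Pu := posdef_unit hP; have [sP _] := hP.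
apply: posdef_eigenvalue_gt0.
  by rewrite linearB /= trmx_inv sP linearZ /= trmx1.
move=> b /eigenvalueP [v vM v0].
have vPV : v *m invmx P = (b + th) *: v.
  move: vM; rewrite mulmxBr -scalemxAr mulmx1 => /eqP; rewrite subr_eq => /eqP ->.
  by rewrite scalerDl.
have vE : v = (b + th) *: (v *m P) by rewrite scalemxAl -vPV mulmxKV.
have bth0 : b + th != 0 by apply: contra v0 => /eqP h; rewrite vE h scale0r.
have vP : v *m P = (b + th)^-1 *: v by rewrite {2}vE scalerA mulVf // scale1r.
have eigP : eigenvalue P (b + th)^-1 by apply/eigenvalueP; exists v.
have inv_gt0 := eigenvalue_posdef_gt0 hP eigP.
have inv_le := eigenvalue_le_lambda1 (lt_trans th_gt0 th_lt) eigP.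
have lam_gt0 : 0 < lambda1 P by rewrite -invr_gt0 (lt_trans th_gt0 th_lt).
have : (lambda1 P)^-1 <= b + th by rewrite -[b + th]invrK lef_pV2 ?posrE.
lra.
Qed.

End RiskSensitiveShift.

Lemma ceil_divn_le (R : archiFieldType) (a N k : nat) : (0 < N)%N ->
  (Num.ceil (a%:R / N%:R : R) <= k%:Z) = (a <= k * N)%N.
Proof.
by move=> N_gt0; rewrite ceil_le_int ler_pdivrMr ?ltr0n // -natrM ler_nat.
Qed.

Section ThetaC.
Variables (R : realType) (n : nat) (c : R).
Implicit Types (P : 'M[R]_n).

(* If no admissible [theta] exists, [xget] returns the default [0]. *)
Lemma theta_cP P : theta_c c P = 0 \/
  0 < theta_c c P /\ theta_c c P < (lambda1 P)^-1.
Proof.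
rewrite /theta_c; case: xgetP => [th _ [th_gt0 [th_lt _]]|_]; by [right | left].
Qed.

Lemma theta_c_ge0 P : 0 <= theta_c c P.
Proof. by case: (theta_cP P) => [->|[/ltW]]. Qed.

Lemma posdef_invmx_sub_theta_c P : posdef P ->
  posdef (invmx P - theta_c c P *: 1%:M).
Proof.
move=> hP; case: (theta_cP P) => [->|[th_gt0 th_lt]].
  by rewrite scale0r subr0; apply: posdef_inv.
exact: posdef_invmx_subr_scale1.
Qed.

End ThetaC.

Section RiccatiComparison.
Variables (R : realType) (n m p : nat) (c : R).
Variables (A : 'M[R]_n) (B : 'M[R]_(n, m)) (C : 'M[R]_(p, n)) (D : 'M[R]_p).
Hypotheses (hB : posdef (B *m B^T)) (hD : posdef (D *m D^T)).
Implicit Types (X Y : 'M[R]_n).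

Definition time_update X := A *m X *m A^T + B *m B^T.

Local Notation info := (C^T *m invmx (D *m D^T) *m C).
Local Notation ric := (ric A B C D).
Local Notation rR := (rR A B C D c).

Lemma psd_info : psd info.
Proof.
by rewrite -[X in _ *m X](trmxK C); apply/psd_conj/posdef_psd/posdef_inv.
Qed.

Lemma ricE X : ric X = time_update (invmx (invmx X + info)).
Proof. by []. Qed.

Lemma rRE X : rR X = time_update (invmx (invmx X - theta_c c X *: 1%:M + info)).
Proof. by rewrite /time_update /rR addrAC. Qed.

Lemma loewner_ge_time_update X Y :
  loewner_ge X Y -> loewner_ge (time_update X) (time_update Y).
Proof.
rewrite /loewner_ge /time_update opprD addrACA subrr addr0 -mulmxBl -mulmxBr.
exact: psd_conj.
Qed.

Lemma time_update_ge X : psd X -> loewner_ge (time_update X) (B *m B^T).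
Proof. by rewrite /loewner_ge /time_update addrK; apply: psd_conj. Qed.

Lemma posdef_time_update X : psd X -> posdef (time_update X).
Proof. by move=> hX; rewrite /time_update addrC; apply/posdefDr/psd_conj. Qed.

Lemma posdef_info_add X : posdef X -> posdef (invmx X + info).
Proof. by move=> hX; apply/posdefDr/psd_info/posdef_inv. Qed.

Lemma posdef_info_add_theta X :
  posdef X -> posdef (invmx X - theta_c c X *: 1%:M + info).
Proof. by move=> hX; apply/posdefDr/psd_info/posdef_invmx_sub_theta_c. Qed.

Lemma posdef_ric X : posdef X -> posdef (ric X).
Proof.
by move=> hX; rewrite ricE; apply/posdef_time_update/posdef_psd/posdef_inv/posdef_info_add.
Qed.

Lemma posdef_rR X : posdef X -> posdef (rR X).
Proof.
move=> hX; rewrite rRE.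
by apply/posdef_time_update/posdef_psd/posdef_inv/posdef_info_add_theta.
Qed.

Lemma loewner_ge_ric X Y : posdef X -> posdef Y -> loewner_ge X Y ->
  loewner_ge (ric X) (ric Y).
Proof.
move=> hX hY hXY; rewrite !ricE; apply/loewner_ge_time_update/loewner_ge_inv.
- exact: posdef_info_add.
- exact: posdef_info_add.
by rewrite /loewner_ge opprD addrACA subrr addr0; apply: loewner_ge_inv.
Qed.

Lemma rR_ge_ric X : posdef X -> loewner_ge (rR X) (ric X).
Proof.
move=> hX; rewrite rRE ricE; apply/loewner_ge_time_update/loewner_ge_inv.
- exact: posdef_info_add.
- exact: posdef_info_add_theta.
rewrite /loewner_ge opprD addrACA subrr addr0 subKr.
exact/psd_scale1/theta_c_ge0.
Qed.

Lemma posdef_iter (f : 'M[R]_n -> 'M[R]_n) k X :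
  (forall Y, posdef Y -> posdef (f Y)) -> posdef X -> posdef (iter k f X).
Proof. by move=> hf hX; elim: k => //= k; apply: hf. Qed.

Lemma iter_rR_ge_iter_ric X q : posdef X ->
  loewner_ge (iter q.+1 rR X) (iter q ric (B *m B^T)).
Proof.
move=> hX; elim: q => [|q IH].
  by rewrite /= rRE; apply/time_update_ge/posdef_psd/posdef_inv/posdef_info_add_theta.
have hrR := posdef_iter q.+1 posdef_rR hX.
apply: loewner_ge_trans (rR_ge_ric hrR) _.
by apply: loewner_ge_ric IH => //; apply: posdef_iter posdef_ric hB.
Qed.

End RiccatiComparison.

Theorem proposition1 (R : realType) (n m p : nat)
  (A : 'M[R]_n) (B : 'M[R]_(n, m)) (C : 'M[R]_(p, n)) (D : 'M[R]_p)
  (hreach : reachable A B) (hobs : observable C A)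
  (hB : posdef (B *m B^T)) (hD : posdef (D *m D^T))
  (c : R) (hc : 0 < c) (N : nat) (hN : (0 < N)%N)
  (P0 : 'M[R]_n) (hP0 : posdef P0) :
  let P := fun t : nat => iter t (rR A B C D c) P0 in
  let Pd := fun k : nat => P (k * N)%N in
  let Pbar := fun t : nat => iter t (ric A B C D) (B *m B^T) in
  forall q : nat,
    (forall t : nat, (q.+1 <= t)%N -> loewner_ge (P t) (Pbar q)) /\
    (forall k : nat, Num.ceil ((q.+1)%:R / N%:R : R) <= k%:Z ->
       loewner_ge (Pd k) (Pbar q)).
Proof.
move=> P Pd Pbar q.
have P_ge t : (q.+1 <= t)%N -> loewner_ge (P t) (Pbar q).
  move=> qt; rewrite /P -(subnKC qt) iterD.
  exact/iter_rR_ge_iter_ric/posdef_iter/hP0/posdef_rR.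
split=> // k; rewrite ceil_divn_le //; exact: P_ge.
Qed.
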